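(* Let $q$ be a prime power and $\mathcal{C}$ a $q$-divisible set of points of $\mathrm{PG}(v-1,q)$ (for some $v$) with $2\le n=|\mathcal{C}|\le q^2$. Then either $n=q^2$ or $q+1$ divides $n$. Moreover, every such value of $n$ (i.e. $n=q^2$, and every multiple of $q+1$ in $[2,q^2]$) is the cardinality of some $q$-divisible set of points in some projective space over $\mathbb{F}_q$.
   Context: $\mathrm{PG}(v-1,q)$ denotes the set of $1$-dimensional subspaces (points) of $\mathbb{F}_q^v$; hyperplanes are the $(v-1)$-dimensional subspaces of $\mathbb{F}_q^v$. A set $\mathcal{C}$ of points is called $\Delta$-divisible (for an integer $\Delta\ge1$) if there is an integer $u$ with $|\mathcal{C}\cap H|\equiv u\pmod{\Delta}$ for every hyperplane $H$, where $\mathcal{C}\cap H$ is the set of points of $\mathcal{C}$ contained in $H$. *)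

From HB Require Import structures.
From mathcomp Require Import all_boot all_order all_algebra all_field.
Set Implicit Arguments. Unset Strict Implicit. Unset Printing Implicit Defensive.
Import GRing.Theory.

(* Subspaces of F^v (row vectors 'rV[F]_v) are represented canonically by
   square matrices A with <<A>>%MS = A (the canonical representative of the
   row space). *)
Definition is_point (F : fieldType) (v : nat) (P : 'M[F]_v) : bool :=
  ((<<P>>%MS == P) && (\rank P == 1%N)).

Definition is_hyperplane (F : fieldType) (v : nat) (H : 'M[F]_v) : bool :=
  ((<<H>>%MS == H) && (\rank H == v.-1)).

Definition point_set (F : finFieldType) (v : nat) (C : {set 'M[F]_v}) : Prop :=
  forall P, P \in C -> is_point P.

Definition hyp_count (F : finFieldType) (v : nat) (C : {set 'M[F]_v}) (H : 'M[F]_v) : nat :=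
  #|[set P in C | (P <= H)%MS]|.

Definition divisible (F : finFieldType) (v : nat) (C : {set 'M[F]_v}) (Delta : nat) : Prop :=
  exists u : nat, forall H : 'M[F]_v, is_hyperplane H ->
    hyp_count C H = u %[mod Delta].

From HB Require Import structures.
From mathcomp Require Import all_boot all_order all_algebra all_field.
From mathcomp Require Import zify ring.

(* For y in F^v let Z y be the number of points of C on the hyperplane y^⊥
   (so Z 0 = n). Double counting gives sum_y Z y = n q^(v-1) and
   sum_y (Z y)^2 = n (q^(v-1) + (n-1) q^(v-2)); with q-divisibility the first
   identity yields Z y = n (mod q) for every y. Write n = a q + b with b < q.
   If n < q^2, some subspace of codimension 2 misses C, and the q + 1
   hyperplanes through it partition C into parts of size at least b, so
   (q + 1) b <= n, i.e. b <= a. On the other hand no Z y lies strictly between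
   b and b + q, so sum_y (Z y - b) (Z y - b - q) >= 0, which is false for
   b < a < q; hence n = a (q + 1). Conversely, k disjoint lines form a
   q-divisible set of k (q + 1) points, and an affine plane one of q^2 points. *)

Set Implicit Arguments.
Unset Strict Implicit.
Unset Printing Implicit Defensive.
Import GRing.Theory.

Lemma sum_nat_bool (T : finType) (p : pred T) :
  \sum_(x : T) (p x : nat) = #|[set x | p x]|.
Proof. by rewrite -sum1dep_card [RHS]big_mkcond; apply: eq_bigr => x _; case: (p x). Qed.

Lemma big_option (T : finType) (g : option T -> nat) :
  \sum_(o : option T) g o = g None + \sum_(b : T) g (Some b).
Proof. by rewrite ![index_enum _]unlock [@Finite.enum in LHS]unlock /= big_cons big_map. Qed.

Lemma leq_card_bigcup (I T : finType) (C : {pred I}) (A : I -> {set T}) :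
  #|\bigcup_(i in C) A i| <= \sum_(i in C) #|A i|.
Proof.
elim/big_ind2: _ => [|m X n Y le_Xm le_Yn|//]; first by rewrite cards0.
exact: leq_trans (leq_card_setU X Y) (leq_add le_Xm le_Yn).
Qed.

(* (z - b) (z - b - d) >= 0, expanded to avoid truncated subtraction *)
Lemma leq_mod_quad (d b z : nat) : z = b %[mod d] -> (2 * b + d) * z <= z ^ 2 + b * (b + d).
Proof.
move=> eq_zb; have [le_zb | lt_bz] := leqP z b.
  rewrite -(subnK le_zb); set c := b - z.
  have -> : z ^ 2 + (c + z) * (c + z + d) = (2 * (c + z) + d) * z + c * (c + d) by ring.
  exact: leq_addr.
have /dvdnP[[|m] def_zb] : d %| z - b by rewrite -eqn_mod_dvd ?(ltnW lt_bz) // eq_zb.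
  by move: lt_bz; rewrite -subn_gt0 def_zb.
have -> : z = b + m.+1 * d by rewrite -def_zb subnKC // ltnW.
have -> : (b + m.+1 * d) ^ 2 + b * (b + d) = (2 * b + d) * (b + m.+1 * d) + m.+1 * m * d ^ 2.
  by ring.
exact: leq_addr.
Qed.

Lemma quad_ineq_eq_digits (q n a b : nat) : n = a * q + b -> b <= a < q ->
  (2 * b + q) * n * q + n <= n * (q + n) + b * (b + q) * q ^ 2 -> a = b.
Proof.
move=> def_n /andP[le_ba lt_aq]; apply: contraTeq => ne_ab; rewrite -ltnNge.
have [k def_a] : exists k, a = b + k.+1.
  by exists (a - b.+1); move: ne_ab; rewrite neq_ltn ltnNge le_ba /=; lia.
have [r def_q] : exists r, q = a + r.+1 by exists (q - a.+1); lia.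
rewrite (_ : _ * q + n = n * (q + n) + b * (b + q) * q ^ 2 + k.+1 * q +
  (k.+1 * q ^ 2 * r + k.+1 * q * (k + r) * b + b + b ^ 2 * (k.+1 * (b + k + r) + 2 * k + 1))).
  by rewrite ltn_addr // -[X in X < _]addn0 ltn_add2l muln_gt0 def_q addnS.
by rewrite def_n def_q def_a; ring.
Qed.

Section LinearRoots.
Variable F : finFieldType.
Local Notation q := #|F|.

Lemma sum_lin_roots (e1 e2 : F) :
  \sum_(b : F) ((e1 + b * e2 == 0)%R : nat) =
    if e2 != 0%R then 1 else if e1 == 0%R then q else 0.
Proof.
have [e2_0 | nz_e2] := eqVneq e2 0%R; last first.
  under eq_bigr => b _ do rewrite addrC addr_eq0 -(divfK nz_e2 (- e1)%R) (inj_eq (mulIf nz_e2)).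
  by rewrite (bigD1 (- e1 / e2)%R) //= eqxx big1 // => b /negbTE->.
rewrite e2_0; under eq_bigr => b _ do rewrite mulr0 addr0.
by rewrite sum_nat_const; case: (e1 == 0%R); rewrite ?muln1 ?muln0.
Qed.

Lemma sum_pencil_roots (e1 e2 : F) :
  (e2 == 0%R) + \sum_(b : F) ((e1 + b * e2 == 0)%R : nat) =
    if (e1 == 0%R) && (e2 == 0%R) then q.+1 else 1.
Proof. by rewrite sum_lin_roots; case: (e2 =P 0%R); case: (e1 == 0%R). Qed.

Lemma sum_lin_roots_mod (e1 e2 : F) :
  \sum_(b : F) ((e1 + b * e2 == 0)%R : nat) = (e2 != 0%R) %[mod q].
Proof. by rewrite sum_lin_roots; case: (e2 != 0%R); case: (e1 == 0%R); rewrite ?modnn ?mod0n. Qed.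

End LinearRoots.

Local Open Scope ring_scope.

Definition dotmx (F : fieldType) n (x y : 'rV[F]_n) : F := (x *m y^T) 0 0.

Section Dot.
Variables (F : fieldType) (n : nat).
Implicit Types x y : 'rV[F]_n.

Lemma dotmxDr x y1 y2 : dotmx x (y1 + y2) = dotmx x y1 + dotmx x y2.
Proof. by rewrite /dotmx linearD mulmxDr mxE. Qed.

Lemma dotmxZr x a y : dotmx x (a *: y) = a * dotmx x y.
Proof. by rewrite /dotmx linearZ -scalemxAr mxE. Qed.

Lemma dotmxZl a x y : dotmx (a *: x) y = a * dotmx x y.
Proof. by rewrite /dotmx -scalemxAl mxE. Qed.

Lemma dotmx_delta i y : dotmx (delta_mx 0 i) y = y 0 i.
Proof. by rewrite /dotmx -rowE !mxE. Qed.

Lemma dotmx_row_mx n1 n2 (x1 : 'rV[F]_n1) (x2 : 'rV[F]_n2) (y : 'rV[F]_(n1 + n2)) :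
  dotmx (row_mx x1 x2) y = dotmx x1 (lsubmx y) + dotmx x2 (rsubmx y).
Proof. by rewrite /dotmx -{1}(hsubmxK y) tr_row_mx mul_row_col mxE. Qed.

Lemma dotmx_scalar (a : F) (z : 'rV[F]_1) : dotmx a%:M z = a * z 0 0.
Proof. by rewrite /dotmx mul_scalar_mx !mxE. Qed.

Lemma genmx_sub_kermx x y : (<<x>> <= kermx y^T)%MS = (dotmx x y == 0).
Proof.
by rewrite genmxE sub_kermx /dotmx {1}[x *m _]mx11_scalar -scalemx1 scalemx_eq0 oner_eq0 orbF.
Qed.

End Dot.

Section ProjectiveSpace.
Variables (F : finFieldType) (v : nat).
Local Notation q := #|F|.
Implicit Types (x y : 'rV[F]_v) (P Q H : 'M[F]_v).

Lemma card_submx m (A : 'M[F]_(m, v)) : #|[set u : 'rV_v | (u <= A)%MS]| = (q ^ \rank A)%N.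
Proof.
have -> : [set u : 'rV_v | (u <= A)%MS] = [set w *m row_base A | w : 'rV_(\rank A)].
  apply/setP => u; rewrite inE; apply/idP/imsetP.
    by rewrite -(eq_row_base A) => /submxP[w ->]; exists w.
  by case=> w _ ->; rewrite -(eq_row_base A) submxMl.
have [B row_baseK] := row_freeP (row_base_free A).
rewrite card_imset ?card_mx ?mul1n //.
by apply: (can_inj (g := mulmx^~ B)) => w; rewrite -mulmxA row_baseK mulmx1.
Qed.

Lemma card_annihilator m (A : 'M[F]_(m, v)) :
  #|[set y : 'rV_v | (A <= kermx y^T)%MS]| = (q ^ (v - \rank A))%N.
Proof.
rewrite -mxrank_tr -mxrank_ker -card_submx; apply: eq_card => y.
by rewrite !inE !sub_kermx -trmx_eq0 trmx_mul trmxK.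
Qed.

Lemma point_genmx x : x != 0 -> is_point <<x>>%MS.
Proof. by move=> nz_x; rewrite /is_point genmx_id eqxx mxrank_gen rank_rV nz_x. Qed.

Lemma is_pointP P : is_point P -> exists2 x : 'rV_v, x != 0 & P = <<x>>%MS.
Proof.
case/andP=> /eqP genP /eqP rkP; exists (nz_row P).
  by rewrite nz_row_eq0 -mxrank_eq0 rkP.
rewrite -[LHS]genP; apply/eq_genmx/eqmx_sym/eqmxP.
by rewrite -(mxrank_leqif_eq (nz_row_sub P)) rank_rV nz_row_eq0 -mxrank_eq0 rkP.
Qed.

Lemma sub_point_eq P Q : is_point P -> is_point Q -> (P <= Q)%MS -> P = Q.
Proof.
case/andP=> /eqP genP /eqP rkP /andP[/eqP genQ /eqP rkQ] sPQ.
rewrite -genP -genQ; apply/eq_genmx/eqmxP.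
by rewrite -(mxrank_leqif_eq sPQ) rkP rkQ.
Qed.

Lemma rank_adds_points P Q : is_point P -> is_point Q -> P != Q -> \rank (P + Q)%MS = 2%N.
Proof.
move=> ptP ptQ neqPQ; have /andP[_ /eqP rkP] := ptP; have /andP[_ /eqP rkQ] := ptQ.
apply/eqP; rewrite eqn_leq (leq_trans (mxrank_adds_leqif P Q)) ?rkP ?rkQ //=.
rewrite -rkP ltnNge (geq_leqif (mxrank_leqif_sup (addsmxSl P Q))) addsmx_sub submx_refl.
by apply: contra neqPQ => sQP; rewrite (sub_point_eq ptQ ptP sQP).
Qed.

Lemma hyperplane_kermx y : y != 0 -> is_hyperplane <<kermx y^T>>%MS.
Proof.
move=> nz_y.
by rewrite /is_hyperplane genmx_id mxrank_gen mxrank_ker mxrank_tr rank_rV nz_y subn1 !eqxx.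
Qed.

Lemma is_hyperplaneP H : (0 < v)%N -> is_hyperplane H -> exists y, H = <<kermx y^T>>%MS.
Proof.
move=> v_gt0 /andP[/eqP genH /eqP rkH].
have rk_perp : \rank (kermx H^T) = 1%N.
  by rewrite mxrank_ker mxrank_tr rkH -{1}(prednK v_gt0) subSnn.
pose y := nz_row (kermx H^T).
have nz_y : y != 0 by rewrite nz_row_eq0 -mxrank_eq0 rk_perp.
have sHy : (H <= kermx y^T)%MS.
  by rewrite sub_kermx -trmx_eq0 trmx_mul trmxK -sub_kermx nz_row_sub.
exists y; rewrite -[LHS]genH; apply/eq_genmx/eqmxP.
by rewrite -(mxrank_leqif_eq sHy) mxrank_ker mxrank_tr rank_rV nz_y rkH subn1.
Qed.

End ProjectiveSpace.

Section HyperplaneCounts.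
Variables (F : finFieldType) (v : nat) (C : {set 'M[F]_v}).
Local Notation q := #|F|.
Local Notation n := #|C|.

Let q_gt0 : (0 < q)%N := ltnW (card_finNzRing_gt1 F).

Lemma hyp_countE H : hyp_count C H = (\sum_(P in C) ((P <= H)%MS : nat))%N.
Proof.
rewrite /hyp_count -sum1dep_card big_mkcondr /=.
by apply: eq_bigr => P _; case: (P <= H)%MS.
Qed.

Lemma hyp_count_genmx H : hyp_count C <<H>>%MS = hyp_count C H.
Proof. by apply: eq_card => P; rewrite !inE genmxE. Qed.

Lemma hyp_count_kermx0 : hyp_count C (kermx (0 : 'rV[F]_v)^T) = n.
Proof. by apply: eq_card => P; rewrite inE sub_kermx trmx0 mulmx0 eqxx andbT. Qed.

Hypothesis ptC : point_set C.

Lemma sum_hyp_count : (\sum_(y : 'rV_v) hyp_count C (kermx y^T) = n * q ^ v.-1)%N.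
Proof.
under eq_bigr => y _ do rewrite hyp_countE.
rewrite exchange_big /= -sum_nat_const; apply: eq_bigr => P CP.
by have /andP[_ /eqP rkP] := ptC CP; rewrite sum_nat_bool card_annihilator rkP subn1.
Qed.

Lemma sum_hyp_count_sq :
  (\sum_(y : 'rV_v) hyp_count C (kermx y^T) ^ 2 = n * (q ^ v.-1 + n.-1 * q ^ (v - 2)))%N.
Proof.
have sqE K : (hyp_count C K ^ 2 = \sum_(P in C) \sum_(Q in C) ((P + Q <= K)%MS : nat))%N.
  rewrite hyp_countE expnS expn1 big_distrl; apply: eq_bigr => P _.
  by rewrite big_distrr; apply: eq_bigr => Q _; rewrite /= addsmx_sub mulnb.
under eq_bigr => y _ do rewrite sqE.
rewrite exchange_big /= -sum_nat_const; apply: eq_bigr => P CP.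
rewrite exchange_big /= (bigD1 P) //= sum_nat_bool card_annihilator.
have /andP[_ /eqP rkP] := ptC CP.
rewrite (addsmx_idPl (submx_refl P)) rkP subn1; congr (_ + _)%N.
rewrite (eq_bigr (fun=> q ^ (v - 2))%N) => [|Q /andP[CQ neqQP]]; last first.
  by rewrite sum_nat_bool card_annihilator rank_adds_points // ?ptC // eq_sym.
rewrite sum_nat_cond_const (cardsD1 P C) CP /=; congr (_ * _)%N.
by apply: eq_card => Q; rewrite !inE andbC.
Qed.

Lemma hyp_count_mod : divisible C q -> (1 < v)%N ->
  forall y : 'rV_v, hyp_count C (kermx y^T) = n %[mod q].
Proof.
case=> u count_u v_gt1.
have q_dvd_exp k : (0 < k)%N -> (q %| q ^ k)%N by move=> k_gt0; rewrite dvdn_exp.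
have count_nz (y : 'rV_v) : y != 0 -> hyp_count C (kermx y^T) = u %[mod q].
  by move=> nz_y; rewrite -hyp_count_genmx count_u ?hyperplane_kermx.
suff n_u : n = u %[mod q].
  by move=> y; have [->|/count_nz->] := eqVneq y 0; rewrite ?hyp_count_kermx0.
set S := (\sum_(y : 'rV_v | y != 0%R) hyp_count C (kermx y^T))%N.
have S_u : (S + u = 0 %[mod q])%N.
  rewrite -modnDml /S -modn_summ (eq_bigr _ count_nz) modn_summ sum_nat_cond_const modnDml.
  have -> : [set y : 'rV[F]_v | y != 0] = [set~ 0] by apply/setP => y; rewrite !inE.
  rewrite cardsC1 card_mx mul1n.
  rewrite -{2}[u]mul1n -mulnDl addn1 prednK ?expn_gt0 ?q_gt0 //.
  by rewrite mod0n; apply/eqP/dvdn_mulr/q_dvd_exp/ltnW.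
have nS_0 : (n + S = 0 %[mod q])%N.
  have := sum_hyp_count; rewrite (bigD1 0) //= hyp_count_kermx0 -/S => ->.
  by rewrite mod0n; apply/eqP/dvdn_mull/q_dvd_exp; rewrite -subn1 subn_gt0.
by rewrite -[#|C|]addn0 -modnDmr -S_u modnDmr addnA -modnDml nS_0 mod0n.
Qed.

Lemma exists_avoiding_pencil : (0 < v)%N -> (n < q ^ 2)%N ->
  exists y1 y2 : 'rV_v, forall P, P \in C -> ~~ ((P <= kermx y1^T) && (P <= kermx y2^T))%MS.
Proof.
move=> v_gt0 n_lt.
pose A (P : 'M[F]_v) :=
  [set p : 'rV[F]_v * 'rV[F]_v | (P <= kermx p.1^T) && (P <= kermx p.2^T)]%MS.
have cardA P : P \in C -> #|A P| = (q ^ v.-1 * q ^ v.-1)%N.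
  move=> CP; have /andP[_ /eqP rkP] := ptC CP.
  have -> : v.-1 = (v - \rank P)%N by rewrite rkP subn1.
  rewrite -card_annihilator -cardsX; apply: eq_card => -[y1 y2].
  by rewrite !inE.
have : ~~ ([set: 'rV[F]_v * 'rV[F]_v] \subset \bigcup_(P in C) A P).
  apply: contraL n_lt => /subset_leq_card/leq_trans/(_ (leq_card_bigcup _ _)).
  rewrite (eq_bigr _ cardA) sum_nat_const cardsT card_prod card_mx mul1n.
  have -> : (q ^ v = q * q ^ v.-1)%N by rewrite -expnS prednK.
  rewrite mulnACA leq_pmul2r ?muln_gt0 ?expn_gt0 ?q_gt0 //.
  by rewrite -leqNgt mulnn.
case/subsetPn => -[y1 y2] _ /bigcupP avoid; exists y1, y2 => P CP.
by apply/negP => PA; apply: avoid; exists P; rewrite ?inE.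
Qed.

Lemma hyp_count_pencil (y1 y2 : 'rV_v) :
  (forall P, P \in C -> ~~ ((P <= kermx y1^T) && (P <= kermx y2^T))%MS) ->
  n = (hyp_count C (kermx y2^T) + \sum_(b : F) hyp_count C (kermx (y1 + b *: y2)^T))%N.
Proof.
move=> avoid; under eq_bigr => b _ do rewrite hyp_countE.
rewrite hyp_countE exchange_big -big_split /= -sum1_card; apply: eq_bigr => P CP.
have [x _ def_P] := is_pointP (ptC CP); move: (avoid P CP); rewrite def_P.
under eq_bigr => b _ do rewrite genmx_sub_kermx dotmxDr dotmxZr.
by rewrite !genmx_sub_kermx sum_pencil_roots => /negbTE->.
Qed.

Lemma dim_gt1 : (1 < n)%N -> (1 < v)%N.
Proof.
case/card_gt1P=> P [Q [CP CQ neqPQ]].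
by rewrite -(rank_adds_points (ptC CP) (ptC CQ) neqPQ) rank_leq_col.
Qed.

Lemma leq_mod_pencil : divisible C q -> (1 < n < q ^ 2)%N -> ((n %% q) * q.+1 <= n)%N.
Proof.
move=> divC /andP[n_gt1 n_lt]; have count_n := hyp_count_mod divC (dim_gt1 n_gt1).
have le_mod_count (y : 'rV_v) : (n %% q <= hyp_count C (kermx y^T))%N.
  by rewrite -(count_n y) leq_mod.
have [y1 [y2 /hyp_count_pencil def_n]] := exists_avoiding_pencil (ltnW (dim_gt1 n_gt1)) n_lt.
rewrite [X in (_ <= X)%N]def_n mulnS leq_add // mulnC.
rewrite -[X in (X <= _)%N](sum_nat_const [pred c : F | true]).
by apply: leq_sum => c _; apply: le_mod_count.
Qed.

(* sum_y (Z y - b) (Z y - b - q) >= 0 with both sums evaluated and q^(v-2) cancelled *)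
Lemma quad_count_ineq : divisible C q -> (1 < n)%N ->
  ((2 * (n %% q) + q) * n * q + n <= n * (q + n) + (n %% q) * (n %% q + q) * q ^ 2)%N.
Proof.
move=> divC n_gt1; have v_gt1 := dim_gt1 n_gt1; set b := (n %% q)%N.
have count_n := hyp_count_mod divC v_gt1.
have sum_ineq : ((2 * b + q) * \sum_(y : 'rV_v) hyp_count C (kermx y^T)
    <= \sum_(y : 'rV_v) hyp_count C (kermx y^T) ^ 2 + q ^ v * (b * (b + q)))%N.
  have -> : (q ^ v = #|{: 'rV[F]_v}|)%N by rewrite card_mx mul1n.
  rewrite big_distrr -sum_nat_const -big_split /=.
  by apply: leq_sum => y _; apply: leq_mod_quad; rewrite count_n modn_mod.
pose N := (q ^ (v - 2))%N.
have exp_pred : (q ^ v.-1 = q * N)%N by rewrite -expnS -subn1 -subSn.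
have exp_v : (q ^ v = q ^ 2 * N)%N by rewrite -expnD subnKC.
rewrite sum_hyp_count sum_hyp_count_sq exp_pred exp_v -/N -(leq_add2r (n * N)) in sum_ineq.
rewrite -(leq_pmul2r (_ : 0 < N)%N) ?expn_gt0 ?q_gt0 //.
move: sum_ineq; rewrite -(prednK (ltnW n_gt1)) /=; set m := n.-1.
have -> : (((2 * b + q) * m.+1 * q + m.+1) * N =
  (2 * b + q) * (m.+1 * (q * N)) + m.+1 * N)%N by ring.
have -> : ((m.+1 * (q + m.+1) + b * (b + q) * q ^ 2) * N =
  m.+1 * (q * N + m * N) + q ^ 2 * N * (b * (b + q)) + m.+1 * N)%N by ring.
done.
Qed.

Lemma dvd_card_small_divisible : divisible C q -> (1 < n < q ^ 2)%N -> (q.+1 %| n)%N.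
Proof.
move=> divC n_range; have /andP[n_gt1 n_lt] := n_range.
have digits : (n %% q <= n %/ q < q)%N.
  rewrite ltn_divLR // mulnn n_lt andbT.
  move: (leq_mod_pencil divC n_range).
  by rewrite {2}(divn_eq n q) mulnS addnC leq_add2r leq_pmul2r.
have eq_ab := quad_ineq_eq_digits (divn_eq n q) digits (quad_count_ineq divC n_gt1).
by rewrite (divn_eq n q) eq_ab -mulnSr dvdn_mull.
Qed.

End HyperplaneCounts.

Lemma eq_genmx_rV (F : fieldType) n (x y : 'rV[F]_n) :
  <<x>>%MS = <<y>>%MS -> exists a, x = a *: y.
Proof. by move=> eq_xy; apply/sub_rVP; rewrite -(genmxE y) -eq_xy genmxE. Qed.

Section SpanPoints.
Variables (F : finFieldType) (v : nat) (I : finType) (x : I -> 'rV[F]_v).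
Hypotheses (nz_x : forall i, x i != 0) (inj_x : injective (fun i => <<x i>>%MS)).

Definition span_points := [set <<x i>>%MS | i : I].

Lemma point_set_span : point_set span_points.
Proof. by move=> P /imsetP[i _ ->]; apply: point_genmx. Qed.

Lemma card_span_points : #|span_points| = #|I|.
Proof. exact: card_imset. Qed.

Lemma hyp_count_span y :
  hyp_count span_points (kermx y^T) = (\sum_(i : I) ((dotmx (x i) y == 0)%R : nat))%N.
Proof.
rewrite hyp_countE big_imset /=; last by move=> i j _ _; apply: inj_x.
by apply: eq_bigr => i _; rewrite genmx_sub_kermx.
Qed.

Lemma divisible_span d u : (0 < v)%N ->
  (forall y, \sum_(i : I) ((dotmx (x i) y == 0)%R : nat) = u %[mod d])%N ->
  divisible span_points d.
Proof.
move=> v_gt0 count_u; exists u => H /(is_hyperplaneP v_gt0)[y ->].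
by rewrite hyp_count_genmx hyp_count_span.
Qed.

End SpanPoints.

Lemma sum_pair (I J : finType) (f : I * J -> nat) :
  (\sum_(p : I * J) f p = \sum_(i : I) \sum_(j : J) f (i, j))%N.
Proof. by rewrite pair_bigA; apply: eq_bigr => -[]. Qed.

Section Lines.
Variables (F : finFieldType) (k : nat).
Local Notation q := #|F|.

(* The q + 1 points of the line spanned by (e_i, 0) and (0, e_i). *)
Definition line_point (p : 'I_k * option F) : 'rV[F]_(k + k) :=
  let e := delta_mx 0 p.1 in if p.2 is Some b then row_mx e (b *: e) else row_mx 0 e.

Lemma dotmx_line_point i o (y : 'rV[F]_(k + k)) :
  dotmx (line_point (i, o)) y =
    if o is Some b then lsubmx y 0 i + b * rsubmx y 0 i else rsubmx y 0 i.
Proof.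
case: o => [b|]; rewrite /line_point /= dotmx_row_mx.
  by rewrite dotmxZl !dotmx_delta.
by rewrite dotmx_delta /dotmx mul0mx mxE add0r.
Qed.

Lemma line_point_neq0 p : line_point p != 0.
Proof.
case: p => i [b|]; apply/eqP => /matrixP;
  [move/(_ 0 (lshift k i)) | move/(_ 0 (rshift k i))];
  by rewrite /line_point /= ?row_mxEl ?row_mxEr !mxE !eqxx => /eqP; rewrite oner_eq0.
Qed.

Lemma line_point_inj : injective (fun p => <<line_point p>>%MS).
Proof.
have one_neq0 : (1 : F) <> 0 by apply/eqP/oner_neq0.
move=> [i o] [j o'] /eq_genmx_rV[l]; rewrite /line_point /=.
case: o o' => [b|] [c|]; rewrite ?scale_row_mx ?scaler0 => /eq_row_mx[+ +];
  move=> /matrixP/(_ 0 i) + /matrixP/(_ 0 i); rewrite !mxE !eqxx /=;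
  case: (eqVneq i j) => [<-|_]; rewrite ?mulr1 ?mulr0 ?mul0r //.
- by move=> <-; rewrite mul1r => ->.
all: try by move/one_neq0.
all: try by move=> _ /one_neq0.
by move=> <-; rewrite mul0r => /one_neq0.
Qed.

Lemma sum_line_points_mod y :
  (\sum_p ((dotmx (line_point p) y == 0)%R : nat) = k %[mod q])%N.
Proof.
rewrite sum_pair -modn_summ (eq_bigr (fun=> 1 %% q)%N) => [|i _].
  by rewrite modn_summ sum_nat_const card_ord muln1.
rewrite big_option dotmx_line_point; under eq_bigr => b _ do rewrite dotmx_line_point.
by rewrite sum_pencil_roots; case: ifP => // _; rewrite -addn1 modnDl.
Qed.

Lemma exists_divisible_lines : (0 < k)%N ->
  exists (v : nat) (C : {set 'M[F]_v}), point_set C /\ divisible C q /\ #|C| = (k * q.+1)%N.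
Proof.
move=> k_gt0; exists (k + k)%N, (span_points line_point).
split; first exact: point_set_span line_point_neq0.
split; first by apply: (divisible_span line_point_inj) => [|y];
  rewrite ?addn_gt0 ?k_gt0 ?sum_line_points_mod.
by rewrite card_span_points ?card_prod ?card_ord ?card_option //; apply: line_point_inj.
Qed.

End Lines.

Section AffinePlane.
Variable F : finFieldType.
Local Notation q := #|F|.

(* The points (1 : a : b), i.e. PG(2, q) minus the line x_0 = 0. *)
Definition affine_point (p : F * F) : 'rV[F]_(1 + (1 + 1)) :=
  row_mx 1%:M (row_mx p.1%:M p.2%:M).

Lemma dotmx_affine_point a b (y : 'rV[F]_(1 + (1 + 1))) :
  dotmx (affine_point (a, b)) y =
    lsubmx y 0 0 + a * lsubmx (rsubmx y) 0 0 + b * rsubmx (rsubmx y) 0 0.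
Proof. by rewrite !dotmx_row_mx !dotmx_scalar mul1r addrA. Qed.

Lemma affine_point_neq0 p : affine_point p != 0.
Proof.
apply/eqP => /matrixP/(_ 0 (lshift _ 0)); rewrite row_mxEl !mxE /=.
by move/eqP; rewrite oner_eq0.
Qed.

Lemma affine_point_inj : injective (fun p => <<affine_point p>>%MS).
Proof.
move=> [a b] [c d] /eq_genmx_rV[l]; rewrite /affine_point !scale_row_mx.
case/eq_row_mx => /matrixP/(_ 0 0) + /eq_row_mx[/matrixP/(_ 0 0) + /matrixP/(_ 0 0)].
by rewrite !mxE /= !mulr1n mulr1 => <-; rewrite !mul1r => -> ->.
Qed.

Lemma sum_affine_points_mod y :
  (\sum_p ((dotmx (affine_point p) y == 0)%R : nat) = 0 %[mod q])%N.
Proof.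
rewrite sum_pair -modn_summ.
rewrite (eq_bigr (fun=> ((rsubmx (rsubmx y) 0 0 != 0)%R : nat) %% q)%N) => [|a _].
  by rewrite modn_summ sum_nat_const modnMr mod0n.
under eq_bigr => b _ do rewrite dotmx_affine_point.
exact: sum_lin_roots_mod.
Qed.

Lemma exists_divisible_affine_plane :
  exists (v : nat) (C : {set 'M[F]_v}), point_set C /\ divisible C q /\ #|C| = (q ^ 2)%N.
Proof.
exists (1 + (1 + 1))%N, (span_points affine_point).
split; first exact: point_set_span affine_point_neq0.
split; first by apply: (divisible_span affine_point_inj isT) => y; apply: sum_affine_points_mod.
by rewrite card_span_points ?card_prod ?mulnn //; apply: affine_point_inj.
Qed.

End AffinePlane.

Theorem theorem5p15 :
  (forall (F : finFieldType) (v : nat) (C : {set 'M[F]_v}),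
      point_set C -> divisible C #|F| ->
      (2 <= #|C| <= #|F| ^ 2)%N ->
      #|C| = (#|F| ^ 2)%N \/ (#|F|.+1 %| #|C|)%N)
  /\
  (forall (F : finFieldType) (n : nat),
      (2 <= n <= #|F| ^ 2)%N ->
      (n = (#|F| ^ 2)%N \/ (#|F|.+1 %| n)%N) ->
      exists (v : nat) (C : {set 'M[F]_v}),
        point_set C /\ divisible C #|F| /\ #|C| = n).
Proof.
split=> [F v C ptC divC /andP[n_gt1] | F n /andP[n_gt1 _] [-> | /dvdnP[k def_n]]].
- rewrite leq_eqVlt => /predU1P[-> | n_lt]; first by left.
  by right; apply: dvd_card_small_divisible; rewrite ?n_gt1.
- exact: exists_divisible_affine_plane.
- rewrite def_n; apply: exists_divisible_lines.
  by move: n_gt1; rewrite def_n lt0n; apply: contraTneq => ->.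
Qed.
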